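(* Let $n\ge2$ and let $M,S,L\subset\mathbb{R}^n$ be the sets of mixed, split and level points. Then there exists a homeomorphism $g:\mathbb{R}^n\to L\times\mathbb{R}$ with $g(M)=L\times(-\infty,0)$ and $g(S)=L\times(0,+\infty)$. In particular $\overline{M}\cap\overline{S}=L$.
   Context: Write $[n]=\{1,\dots,n\}$. For $x\in\mathbb{R}^n$ let $t(x)=\min\{x_k-x_{k'}: k\in[n]\text{ odd},\ k'\in[n]\text{ even}\}$. The point $x$ is mixed, level or split according as $t(x)<0$, $t(x)=0$ or $t(x)>0$; $M$, $L$, $S$ denote the sets of mixed, level and split points in $\mathbb{R}^n$. *)

From Stdlib Require Import Reals.
From mathcomp Require Import all_boot.
Set Implicit Arguments. Unset Strict Implicit. Unset Printing Implicit Defensive.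

(* A point of R^n: coordinates indexed by 'I_n = {0,...,n-1}.
   Index i : 'I_n corresponds to the paper's k = i+1 in [n]. *)
Definition pt (n : nat) := 'I_n -> R.

Open Scope R_scope.

Definition diffs (n : nat) (x : pt n) : seq R :=
  [seq x p.1 - x p.2 | p : 'I_n * 'I_n <- [seq (i, j) | i <- enum 'I_n, j <- enum 'I_n]
                     & odd (p.1).+1 && ~~ odd (p.2).+1].

(* t(x) = min of the differences (the list is nonempty when n >= 2). *)
Definition tval (n : nat) (x : pt n) : R :=
  match diffs x with
  | [::] => 0
  | d :: ds => foldr Rmin d ds
  end.

Definition is_mixed (n : nat) (x : pt n) : Prop := tval x < 0.
Definition is_level (n : nat) (x : pt n) : Prop := tval x = 0.
Definition is_split (n : nat) (x : pt n) : Prop := tval x > 0.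

(* Sup-norm closeness on R^n (induces the standard topology). *)
Definition close (n : nat) (x y : pt n) (eps : R) : Prop :=
  forall i, Rabs (x i - y i) < eps.

Definition cont_to_prod (n : nat) (g : pt n -> pt n * R) : Prop :=
  forall x eps, eps > 0 -> exists delta, delta > 0 /\
    forall y, close x y delta ->
      close (g x).1 (g y).1 eps /\ Rabs ((g x).2 - (g y).2) < eps.

Definition cont_on_LxR (n : nat) (h : pt n * R -> pt n) : Prop :=
  forall l s, is_level l -> forall eps, eps > 0 -> exists delta, delta > 0 /\
    forall l' s', is_level l' -> close l l' delta -> Rabs (s - s') < delta ->
      close (h (l, s)) (h (l', s')) eps.

Definition rclosure (n : nat) (A : pt n -> Prop) (x : pt n) : Prop :=
  forall eps, eps > 0 -> exists y, A y /\ close x y eps.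

From Pilot Require Import Defs.
From Stdlib Require Import Reals Lra FunctionalExtensionality.
From mathcomp Require Import all_boot.
Open Scope R_scope.
Set Implicit Arguments. Unset Strict Implicit.

(* Let [u] be the sum of the basis vectors with odd index.  Every difference
   x_k - x_k' (k odd, k' even) grows by exactly c along x + c u, so
   t(x + c u) = t(x) + c.  Hence g x = (x - t(x) u, t(x)) straightens R^n into
   L x R with inverse (l, s) |-> l + s u, and the second coordinate is t.
   Since t is 2-Lipschitz for the sup norm, both maps are continuous, and
   mixed/split points are exactly those with negative/positive coordinate. *)

Lemma Rmin_addr a b c : Rmin (a + c) (b + c) = Rmin a b + c.
Proof. by rewrite /Rmin; case: Rle_dec; case: Rle_dec => *; lra. Qed.

Lemma Rmin_lipschitz a b a' b' e :
  Rabs (a - a') < e -> Rabs (b - b') < e -> Rabs (Rmin a b - Rmin a' b') < e.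
Proof.
rewrite /Rmin; case: Rle_dec; case: Rle_dec;
  rewrite /Rabs; repeat case: Rcase_abs; lra.
Qed.

Definition seqmin (s : seq R) : R :=
  if s is d :: ds then foldr Rmin d ds else 0.

Lemma seqmin_addr (T : Type) (f : T -> R) (s : seq T) c : s <> [::] ->
  seqmin [seq f p + c | p <- s] = seqmin (map f s) + c.
Proof.
case: s => [//|p s] _ /=.
by elim: s => [|q s IHs] //=; rewrite IHs Rmin_addr.
Qed.

Lemma seqmin_lipschitz (T : Type) (f g : T -> R) (s : seq T) e : e > 0 ->
  (forall p, Rabs (f p - g p) < e) ->
  Rabs (seqmin (map f s) - seqmin (map g s)) < e.
Proof.
move=> e_gt0 fg; case: s => [|p s] /=.
  by rewrite Rminus_0_r Rabs_R0.
by elim: s => [|q s IHs] /=; [exact: fg | exact: Rmin_lipschitz].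
Qed.

Definition odd_even_pairs (n : nat) : seq ('I_n * 'I_n) :=
  [seq p : 'I_n * 'I_n <- [seq (i, j) | i <- enum 'I_n, j <- enum 'I_n]
     | odd (p.1).+1 && ~~ odd (p.2).+1].

(* [Defs.tval] is qualified throughout: all_boot's [tval] is the tuple projection. *)
Lemma tvalE n (x : pt n) :
  Defs.tval x = seqmin [seq x p.1 - x p.2 | p <- odd_even_pairs n].
Proof. by []. Qed.

Lemma odd_even_pairs_neq0 n : (2 <= n)%N -> odd_even_pairs n <> [::].
Proof.
move=> n_ge2; have n_gt0 : (0 < n)%N by apply: leq_trans n_ge2.
have : (Ordinal n_gt0, Ordinal n_ge2) \in odd_even_pairs n.
  by rewrite mem_filter /=; apply: allpairs_f; rewrite mem_enum.
by move=> + pairs0; rewrite pairs0.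
Qed.

Definition odd_dir n (i : 'I_n) : R := if odd i.+1 then 1 else 0.

Lemma odd_dir_bounds n (i : 'I_n) : 0 <= odd_dir i <= 1.
Proof. by rewrite /odd_dir; case: odd; lra. Qed.

Definition shift n (x : pt n) (c : R) : pt n := fun i => x i + c * odd_dir i.

Lemma tval_shift n (x : pt n) c : (2 <= n)%N ->
  Defs.tval (shift x c) = Defs.tval x + c.
Proof.
move=> n_ge2; rewrite !tvalE -seqmin_addr; last exact: odd_even_pairs_neq0.
congr seqmin; apply/eq_in_map => p.
rewrite mem_filter => /andP[/andP[odd_p1 even_p2] _].
by rewrite /shift /odd_dir odd_p1 (negbTE even_p2); lra.
Qed.

Lemma tval_lipschitz n (x y : pt n) e : e > 0 -> close x y e ->
  Rabs (Defs.tval x - Defs.tval y) < 2 * e.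
Proof.
move=> e_gt0 xy; rewrite !tvalE; apply: seqmin_lipschitz; first lra.
move=> p; have := xy p.1; have := xy p.2.
by rewrite /Rabs; repeat case: Rcase_abs; lra.
Qed.

Lemma close_shift n (x y : pt n) a b d e :
  close x y d -> Rabs (a - b) < e -> close (shift x a) (shift y b) (d + e).
Proof.
move=> xy ab i; rewrite /shift.
have -> : x i + a * odd_dir i - (y i + b * odd_dir i)
          = (x i - y i) + (a - b) * odd_dir i by ring.
apply: Rle_lt_trans (Rabs_triang _ _) _.
have [dir_ge0 dir_le1] := odd_dir_bounds i.
rewrite Rabs_mult (Rabs_right (odd_dir i)); last lra.
have := xy i; have := Rabs_pos (a - b); nra.
Qed.

Lemma close_shift_self n (x : pt n) c e : Rabs c < e -> close x (shift x c) e.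
Proof.
move=> c_lt i; rewrite /shift.
have -> : x i - (x i + c * odd_dir i) = - (c * odd_dir i) by ring.
have [dir_ge0 dir_le1] := odd_dir_bounds i.
rewrite Rabs_Ropp Rabs_mult (Rabs_right (odd_dir i)); last lra.
have := Rabs_pos c; nra.
Qed.

Definition to_level n (x : pt n) : pt n * R := (shift x (- Defs.tval x), Defs.tval x).

Definition from_level n (p : pt n * R) : pt n := shift p.1 p.2.

Section Straightening.

Variable n : nat.
Hypothesis n_ge2 : (2 <= n)%N.

Lemma to_level_level (x : pt n) : is_level (to_level x).1.
Proof. by rewrite /is_level tval_shift //; lra. Qed.

Lemma tval_from_level (l : pt n) s : is_level l -> Defs.tval (from_level (l, s)) = s.
Proof. by rewrite /is_level /from_level /= tval_shift // => ->; lra. Qed.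

Lemma from_to_level (x : pt n) : from_level (to_level x) = x.
Proof.
by apply: functional_extensionality => i; rewrite /from_level /to_level /shift /=; ring.
Qed.

Lemma to_from_level (l : pt n) s : is_level l -> to_level (from_level (l, s)) = (l, s).
Proof.
move=> l_level; rewrite /to_level tval_from_level //; congr pair.
by apply: functional_extensionality => i; rewrite /from_level /shift /=; ring.
Qed.

Lemma to_level_continuous : cont_to_prod (@to_level n).
Proof.
move=> x eps eps_gt0; exists (eps / 3); split; first lra.
move=> y xy; have tx_ty := tval_lipschitz (ltac:(lra) : eps / 3 > 0) xy.
split; last by rewrite /=; lra.
have -> : eps = eps / 3 + 2 * (eps / 3) by field.
apply: close_shift => //.
have -> : - Defs.tval x - - Defs.tval y = - (Defs.tval x - Defs.tval y) by ring.
by rewrite Rabs_Ropp.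
Qed.

Lemma from_level_continuous : cont_on_LxR (@from_level n).
Proof.
move=> l s _ eps eps_gt0; exists (eps / 2); split; first lra.
move=> l' s' _ ll' ss'; have -> : eps = eps / 2 + eps / 2 by field.
exact: close_shift.
Qed.

Lemma to_level_image (P : R -> Prop) (p : pt n * R) :
  (exists x, P (Defs.tval x) /\ to_level x = p) <-> is_level p.1 /\ P p.2.
Proof.
split.
  by move=> [x [Px <-]]; split; [exact: to_level_level | ].
case: p => l s /= [l_level Ps]; exists (from_level (l, s)).
by rewrite tval_from_level // to_from_level.
Qed.

Lemma rclosure_tval_le (A : pt n -> Prop) (x : pt n) c :
  (forall y, A y -> Defs.tval y <= c) -> rclosure A x -> Defs.tval x <= c.
Proof.
move=> A_le x_cl; apply: Rnot_lt_le => c_lt.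
have [|y [Ay xy]] := x_cl ((Defs.tval x - c) / 2); first lra.
have := tval_lipschitz (ltac:(lra) : (Defs.tval x - c) / 2 > 0) xy.
by have := A_le y Ay; rewrite /Rabs; case: Rcase_abs; lra.
Qed.

Lemma rclosure_tval_ge (A : pt n -> Prop) (x : pt n) c :
  (forall y, A y -> c <= Defs.tval y) -> rclosure A x -> c <= Defs.tval x.
Proof.
move=> A_ge x_cl; apply: Rnot_lt_le => c_gt.
have [|y [Ay xy]] := x_cl ((c - Defs.tval x) / 2); first lra.
have := tval_lipschitz (ltac:(lra) : (c - Defs.tval x) / 2 > 0) xy.
by have := A_ge y Ay; rewrite /Rabs; case: Rcase_abs; lra.
Qed.

Lemma level_in_rclosure (P : R -> Prop) (x : pt n) :
  is_level x -> (forall e, e > 0 -> exists c, Rabs c < e /\ P c) ->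
  rclosure (fun y => P (Defs.tval y)) x.
Proof.
move=> x_level P_near eps eps_gt0.
have [c [c_small Pc]] := P_near eps eps_gt0.
exists (from_level (x, c)); rewrite tval_from_level //.
by split => //; apply: close_shift_self.
Qed.

End Straightening.

Theorem lemma1p9 (n : nat) (hn : (2 <= n)%N) :
  (exists (g : pt n -> pt n * R) (h : pt n * R -> pt n),
      (* g maps into L x R, with inverse h on L x R *)
      (forall x, is_level (g x).1) /\
      (forall x, h (g x) = x) /\
      (forall l s, is_level l -> g (h (l, s)) = (l, s)) /\
      (* g and its inverse are continuous *)
      cont_to_prod g /\ cont_on_LxR h /\
      (* g(M) = L x (-oo,0) *)
      (forall p, (exists x, is_mixed x /\ g x = p) <-> (is_level p.1 /\ p.2 < 0)) /\
      (* g(S) = L x (0,+oo) *)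
      (forall p, (exists x, is_split x /\ g x = p) <-> (is_level p.1 /\ p.2 > 0)))
  /\
  (forall x : pt n, (rclosure (@is_mixed n) x /\ rclosure (@is_split n) x) <-> is_level x).
Proof.
split.
  exists (@to_level n), (@from_level n).
  split; first exact: to_level_level.
  split; first exact: from_to_level.
  split; first exact: to_from_level.
  split; first exact: to_level_continuous.
  split; first exact: from_level_continuous.
  split => p; [exact: (to_level_image hn (fun t => t < 0))
              | exact: (to_level_image hn (fun t => t > 0))].
move=> x; split.
  move=> [mixed_cl split_cl]; apply: Rle_antisym.
    by apply: (rclosure_tval_le (A := @is_mixed n)) mixed_cl => y /Rlt_le.
  by apply: (rclosure_tval_ge (A := @is_split n)) split_cl => y /Rlt_le.
move=> x_level; split.
  apply: (level_in_rclosure (P := fun t => t < 0) hn x_level) => e e_gt0.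
  by exists (- (e / 2)); rewrite Rabs_Ropp Rabs_right; lra.
apply: (level_in_rclosure (P := fun t => t > 0) hn x_level) => e e_gt0.
by exists (e / 2); rewrite Rabs_right; lra.
Qed.
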